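(* Let $\Lambda$ be a finite chain (path graph) with vertices $1,\dots,L$, $L\geq2$, and edges $(x,x+1)$ with arbitrary positive jump rates. For the symmetric simple exclusion process on $\Lambda$, $\lambda(n)=\lambda(1)$ for all $1\le n\le L-1$.
   Context: The SSEP with jump rates $c_{xy}>0$ has generator $(Lf)(\eta)=\sum_{x\sim y}c_{xy}(f(\eta)-f(\eta^{xy}))$ on functions on $\{0,1\}^\Lambda$, where $\eta^{xy}$ interchanges the values of $\eta$ at $x$ and $y$. $L$ preserves the space of functions supported on configurations with exactly $n$ particles ($\sum_x\eta(x)=n$), and $\lambda(n)$ is the smallest positive eigenvalue of $L$ restricted to this space. *)

From HB Require Import structures.
From mathcomp Require Import all_boot all_order all_algebra all_fingroup.
From mathcomp Require Import reals.
Set Implicit Arguments. Unset Strict Implicit. Unset Printing Implicit Defensive.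
Import Order.TTheory GRing.Theory Num.Theory.
Local Open Scope ring_scope.

(* Sites of the chain: 'I_L = {0,...,L-1} (paper: 1..L).
   Edges: {x, x+1}; the rate of edge {x,x+1} is c x (for x < L-1). *)

Definition config (L : nat) := {ffun 'I_L -> bool}.

Definition nparticles (L : nat) (eta : config L) : nat :=
  (\sum_(x : 'I_L) (eta x : nat))%N.

Definition swap (L : nat) (eta : config L) (x y : 'I_L) : config L :=
  [ffun z => eta (tperm x y z)].

Definition ssep_gen (R : realType) (L : nat) (c : nat -> R)
  (f : config L -> R) (eta : config L) : R :=
  \sum_(x : 'I_L) \sum_(y : 'I_L | val y == (val x).+1)
     c (val x) * (f eta - f (swap eta x y)).

Definition is_eigenvalue_n (R : realType) (L : nat) (c : nat -> R) (n : nat)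
  (mu : R) : Prop :=
  exists f : config L -> R,
    (forall eta, nparticles eta != n -> f eta = 0) /\
    (exists eta, f eta != 0) /\
    (forall eta, ssep_gen c f eta = mu * f eta).

Definition is_lambda (R : realType) (L : nat) (c : nat -> R) (n : nat)
  (mu : R) : Prop :=
  [/\ is_eigenvalue_n L c n mu, 0 < mu &
      forall nu, is_eigenvalue_n L c n nu -> 0 < nu -> mu <= nu].

From HB Require Import structures.
From mathcomp Require Import all_boot all_order all_algebra all_fingroup.
From mathcomp Require Import reals.
From mathcomp Require Import ring lra zify.
From mathcomp Require Import polyrcf.

(* Shooting on the one-particle chain: with p_0 = 0, p_1 = 1 and
   p_{j+2} = (2 - t / c_j) p_{j+1} - p_j, let T be the first positive root of
   p_1 ... p_L.  A sign argument on the three-term recursion shows that T is a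
   root of p_L and that v_j = p_j(T) > 0 for 0 < j < L.  Then
   phi_z = (v_z - v_{z+1}) / T is an eigenfunction of the one-particle walk with
   eigenvalue T, and the occupation statistic sum_z eta(z) phi(z), restricted
   to the n-particle layer, is an eigenfunction with the same eigenvalue for
   every 0 < n < L.
   Conversely, let f be an eigenfunction with eigenvalue nu > 0 and let the hop
   of a particle from x to x+1 in eta maximize |f(eta^{x,x+1}) - f(eta)| / w_x,
   where w_x = v_{x+1} / c_x.  Comparing the generator at eta and at
   eta^{x,x+1} edge by edge, each edge contributes at least its share of
   K (2 v_{x+1} - v_x - v_{x+2}) = K T w_x, where K is the maximal ratio;
   hence nu >= T. *)

Set Implicit Arguments. Unset Strict Implicit. Unset Printing Implicit Defensive.
Import Order.TTheory GRing.Theory Num.Theory.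
Local Open Scope ring_scope.

Lemma sum_if_eq (V : nmodType) (n m : nat) (a : V) :
  \sum_(i < n) (if val i == m then a else 0) = if (m < n)%N then a else 0.
Proof. by rewrite -big_mkcond big_ord1_eq. Qed.

Lemma sum_mul_tpermB (R : comRingType) (I : finType) (h p : I -> R) (a b : I) :
  a != b ->
  \sum_z h z * p z - \sum_z h (tperm a b z) * p z = (h a - h b) * (p a - p b).
Proof.
move=> ab; rewrite -sumrB (bigD1 a) //= (bigD1 b) 1?eq_sym //= tpermL tpermR.
rewrite big1 ?addr0 => [|z /andP[zb za]]; first by ring.
by rewrite tpermD 1?eq_sym // subrr.
Qed.

Lemma sum_ltn_ord (m n : nat) : (\sum_(z < m) (z < n : nat))%N = minn m n.
Proof.
elim: m => [|m IHm]; first by rewrite big_ord0 min0n.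
by rewrite big_ord_recr /= IHm; lia.
Qed.

Section Swap.
Variable L : nat.
Implicit Types (eta : config L) (a b z : 'I_L).

Lemma swapE eta a b z :
  swap eta a b z = if z == a then eta b else if z == b then eta a else eta z.
Proof.
rewrite ffunE; have [->|za] := eqVneq z a; first by rewrite tpermL.
by have [->|zb] := eqVneq z b; rewrite ?tpermR // tpermD // eq_sym.
Qed.

Lemma swapK eta a b : swap (swap eta a b) a b = eta.
Proof. by apply/ffunP => z; rewrite !ffunE tpermK. Qed.

Lemma swap_id eta a b : eta a = eta b -> swap eta a b = eta.
Proof.
move=> eq_ab; apply/ffunP => z; rewrite swapE.
by have [->|_] := eqVneq z a; [|have [->|] := eqVneq z b].
Qed.

Lemma swapC eta a b a' b' :
  a != a' -> a != b' -> b != a' -> b != b' ->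
  swap (swap eta a b) a' b' = swap (swap eta a' b') a b.
Proof.
move=> aa' ab' ba' bb'; apply/ffunP => z; rewrite !ffunE; congr (eta _).
by rewrite (inj_tperm _ _ _ (@perm_inj _ (tperm a b))) [tperm a b a']tpermD ?[tperm a b b']tpermD.
Qed.

Lemma nparticles_swap eta a b : nparticles (swap eta a b) = nparticles eta.
Proof.
rewrite /nparticles (reindex_inj (@perm_inj _ (tperm a b))) /=.
by apply: eq_bigr => z _; rewrite ffunE tpermK.
Qed.

Lemma nparticles_prefix n : (n <= L)%N ->
  nparticles [ffun z : 'I_L => (z < n)%N] = n.
Proof.
move=> n_le; rewrite /nparticles; under eq_bigr do rewrite ffunE.
by rewrite sum_ltn_ord; apply/minn_idPr.
Qed.

End Swap.

Section Generator.
Variables (R : realType) (L : nat) (c : nat -> R).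

Lemma ssep_genZ (a : R) (f : config L -> R) eta :
  ssep_gen c (fun e => a * f e) eta = a * ssep_gen c f eta.
Proof.
rewrite /ssep_gen mulr_sumr; apply: eq_bigr => x _.
by rewrite mulr_sumr; apply: eq_bigr => y _; rewrite mulrCA -mulrBr.
Qed.

Definition restrict_layer (n : nat) (f : config L -> R) (eta : config L) : R :=
  if nparticles eta == n then f eta else 0.

Lemma ssep_gen_restrict_layer n (f : config L -> R) eta :
  ssep_gen c (restrict_layer n f) eta = restrict_layer n (ssep_gen c f) eta.
Proof.
rewrite /ssep_gen /restrict_layer; have [eta_n|eta_n] := eqVneq (nparticles eta) n.
  by apply: eq_bigr => x _; apply: eq_bigr => y _; rewrite nparticles_swap eta_n eqxx.
apply: big1 => x _; apply: big1 => y _.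
by rewrite nparticles_swap (negbTE eta_n) subrr mulr0.
Qed.

End Generator.

Section Chain.
Variable k : nat.
Local Notation L := k.+2.
Implicit Types (eta : config L) (i j : nat).

Definition site i : 'I_L := inord i.

Definition flip eta i : config L := swap eta (site i) (site i.+1).

Definition hops eta i : bool := eta (site i) && ~~ eta (site i.+1).

Lemma site_eq i j : (i < L)%N -> (j < L)%N -> (site i == site j) = (i == j).
Proof. by move=> ? ?; rewrite -val_eqE /= !inordK. Qed.

Lemma ssep_gen_chain (R : realType) (c : nat -> R) (f : config L -> R) eta :
  ssep_gen c f eta = \sum_(i < k.+1) c i * (f eta - f (flip eta i)).
Proof.
rewrite /ssep_gen big_ord_recr /= [X in _ + X]big_pred0 ?addr0 => [|y]; last exact: ltn_eqF.
apply: eq_bigr => i _.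
have site_i : widen_ord (leqnSn _) i = site i by apply/val_inj; rewrite /= inordK // leqW.
rewrite (big_pred1 (site i.+1)) /= => [|y]; first by rewrite site_i.
have i1_lt : (i.+1 < L)%N := ltn_ord i.
by rewrite /= -[RHS]val_eqE /= inordK.
Qed.

Lemma flipK eta i : flip (flip eta i) i = eta.
Proof. exact: swapK. Qed.

Lemma flip_id eta i : eta (site i) = eta (site i.+1) -> flip eta i = eta.
Proof. exact: swap_id. Qed.

Lemma flip_left eta i : flip eta i (site i) = eta (site i.+1).
Proof. by rewrite swapE eqxx. Qed.

Lemma flip_right eta i : flip eta i (site i.+1) = eta (site i).
Proof. by rewrite swapE eqxx; case: eqP => [->|]. Qed.

Lemma flip_other eta i j : (i.+1 < L)%N -> (j < L)%N -> j != i -> j != i.+1 ->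
  flip eta i (site j) = eta (site j).
Proof. by move=> ? ? ji ji1; rewrite swapE !site_eq ?(negbTE ji) ?(negbTE ji1) // ltnW. Qed.

Lemma flipC eta i j : (i.+1 < L)%N -> (j.+1 < L)%N ->
  i != j -> i.+1 != j -> i != j.+1 ->
  flip (flip eta i) j = flip (flip eta j) i.
Proof.
by move=> ? ? ij i1j ij1; rewrite /flip swapC // site_eq ?eqSS // ltnW.
Qed.

Lemma nparticles_flip eta i : nparticles (flip eta i) = nparticles eta.
Proof. exact: nparticles_swap. Qed.

Section GradientBounds.
Variables (R : realType) (g : config L -> R) (w : nat -> R) (K : R).
Hypothesis g_grad :
  forall et i, (i < k.+1)%N -> hops et i -> g (flip et i) - g et <= K * w i.
Variables (eta : config L) (x : nat).
Hypotheses (x_lt : (x < k.+1)%N) (eta_hops : hops eta x).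
Let xi := flip eta x.

Lemma grad_flip_left i : i.+1 = x ->
  g (flip xi i) - g (flip eta i) <= g xi - g eta + K * w i.
Proof.
move=> ix; have i_lt : (i < k.+1)%N by lia.
move: eta_hops; rewrite /hops -ix => /andP[eta_x /negbTE eta_x1].
have [eta_i|eta_i] := boolP (eta (site i)).
- have xi_hops : hops xi i.
    by rewrite /hops /xi -ix flip_left eta_x1 flip_other ?eta_i //; lia.
  have := g_grad i_lt xi_hops; rewrite (@flip_id eta i) ?eta_i ?eta_x //; lra.
- have m_hops : hops (flip eta i) i by rewrite /hops flip_left flip_right eta_x.
  have := g_grad i_lt m_hops; rewrite flipK (@flip_id xi i); last first.
    by rewrite /xi -ix flip_left eta_x1 flip_other ?(negbTE eta_i) //; lia.
  lra.
Qed.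

Lemma grad_flip_right i : i = x.+1 -> (i < k.+1)%N ->
  g (flip xi i) - g (flip eta i) <= g xi - g eta + K * w i.
Proof.
move=> -> i_lt; move: eta_hops; rewrite /hops => /andP[eta_x /negbTE eta_x1].
have [eta_x2|eta_x2] := boolP (eta (site x.+2)).
- have m_hops : hops (flip eta x.+1) x.+1.
    by rewrite /hops flip_left flip_right eta_x2 eta_x1.
  have := g_grad i_lt m_hops; rewrite flipK (@flip_id xi x.+1); first lra.
  by rewrite /xi flip_right flip_other ?eta_x ?eta_x2 //; lia.
- have xi_hops : hops xi x.+1.
    by rewrite /hops /xi flip_right flip_other ?eta_x ?(negbTE eta_x2) //; lia.
  have := g_grad i_lt xi_hops; rewrite (@flip_id eta x.+1) ?eta_x1 ?(negbTE eta_x2) //.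
  lra.
Qed.

Lemma grad_flip_disjoint i : (i < k.+1)%N -> i != x -> i.+1 != x -> i != x.+1 ->
  g (flip xi i) - g (flip eta i) <= K * w x.
Proof.
move=> i_lt ix i1x ix1; move: eta_hops; rewrite /hops => /andP[eta_x eta_x1].
have m_hops : hops (flip eta i) x.
  by rewrite /hops !flip_other ?eta_x //; lia.
rewrite /xi flipC; first exact: g_grad x_lt m_hops.
all: lia.
Qed.

End GradientBounds.


Lemma flip_invariant_of_hops (T : Type) (f : config L -> T) :
  (forall eta i, (i < k.+1)%N -> hops eta i -> f (flip eta i) = f eta) ->
  forall eta i, (i < k.+1)%N -> f (flip eta i) = f eta.
Proof.
move=> f_hops eta i i_lt; rewrite /hops in f_hops.
case eta_i: (eta (site i)); case eta_i1: (eta (site i.+1)).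
- by rewrite flip_id ?eta_i ?eta_i1.
- by rewrite f_hops ?eta_i ?eta_i1.
- by rewrite -[in RHS](flipK eta i) (f_hops (flip eta i)) // flip_left flip_right eta_i eta_i1.
- by rewrite flip_id ?eta_i ?eta_i1.
Qed.

Section Spectral.
Variables (R : realType) (c : nat -> R) (T : R) (v : nat -> R).
Hypotheses (c_gt0 : forall i, (i < k.+1)%N -> 0 < c i) (T_gt0 : 0 < T).
Hypotheses (v0 : v 0%N = 0) (vL : v L = 0) (v_gt0 : forall j, (0 < j < L)%N -> 0 < v j).
Local Notation w i := (v i.+1 / c i).
Hypothesis v_rec : forall i, (i < k.+1)%N -> 2 * v i.+1 - v i - v i.+2 = T * w i.

Lemma w_gt0 i : (i < k.+1)%N -> 0 < w i.
Proof. by move=> i_lt; rewrite divr_gt0 ?c_gt0 // v_gt0. Qed.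

Lemma c_mul_w i : (i < k.+1)%N -> c i * w i = v i.+1.
Proof. by move=> i_lt; rewrite mulrC divfK // gt_eqF ?c_gt0. Qed.

(* The share of edge [i] in [2 v x.+1 - v x - v x.+2 = T * w x]. *)
Let weight x i : R := (if i == x then 2 * v x.+1 else 0)
  - (if i.+1 == x then v x else 0) - (if i == x.+1 then v x.+2 else 0).

Lemma sum_weight x : (x < k.+1)%N ->
  \sum_(i < k.+1) weight x i = 2 * v x.+1 - v x - v x.+2.
Proof.
move=> x_lt; rewrite !sumrB !sum_if_eq x_lt.
congr (_ - _ - _).
- case: x x_lt => [|x] x_lt; first by rewrite v0 big1.
  under eq_bigr => i _ do rewrite eqSS.
  by rewrite sum_if_eq ltnW.
- by case: ltnP => // x_ge; have -> : x = k by lia.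
Qed.

Section MaxGradient.
Variables (g : config L -> R) (K : R).
Hypothesis g_grad :
  forall et i, (i < k.+1)%N -> hops et i -> g (flip et i) - g et <= K * w i.
Variables (eta : config L) (x : nat).
Hypotheses (x_lt : (x < k.+1)%N) (eta_hops : hops eta x).
Let xi := flip eta x.
Hypothesis grad_max : g xi - g eta = K * w x.

Lemma edge_term_ge i : (i < k.+1)%N ->
  K * weight x i <= c i * ((g xi - g eta) - (g (flip xi i) - g (flip eta i))).
Proof.
move=> i_lt; have c_ge0 := ltW (c_gt0 i_lt); rewrite /weight /=.
have [->|ix] := eqVneq i x.
  have cw := c_mul_w x_lt; have gm := grad_max.
  set W := v x.+1 / c x in gm cw *.
  rewrite gtn_eqF // ltn_eqF // /xi flipK -/xi -cw; nra.
have cw := c_mul_w i_lt; set W := v i.+1 / c i in cw *.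
have [i1x|i1x] := eqVneq i.+1 x.
  rewrite ifF; last by apply/eqP; lia.
  have := grad_flip_left g_grad x_lt eta_hops i1x.
  rewrite -/xi -/W -i1x -cw; nra.
have [ix1|ix1] := eqVneq i x.+1.
  have := grad_flip_right g_grad x_lt eta_hops ix1 i_lt.
  rewrite -/xi -/W -ix1 -cw; nra.
have := grad_flip_disjoint g_grad x_lt eta_hops i_lt ix i1x ix1.
rewrite -/xi -grad_max; nra.
Qed.

End MaxGradient.

Lemma eigenvalue_ge_of_max_gradient (g : config L -> R) (nu K : R)
    (eta : config L) (x : nat) :
  (forall e, ssep_gen c g e = nu * g e) -> 0 < K ->
  (forall et i, (i < k.+1)%N -> hops et i -> g (flip et i) - g et <= K * w i) ->
  (x < k.+1)%N -> hops eta x -> g (flip eta x) - g eta = K * w x ->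
  T <= nu.
Proof.
move=> g_eig K_gt0 g_grad x_lt eta_hops grad_max.
set D := g (flip eta x) - g eta.
have D_gt0 : 0 < D by rewrite /D grad_max mulr_gt0 ?w_gt0.
have nuD : nu * D = \sum_(i < k.+1)
    c i * (D - (g (flip (flip eta x) i) - g (flip eta i))).
  by rewrite /D mulrBr -!g_eig !ssep_gen_chain -sumrB; apply: eq_bigr => i _; ring.
have : \sum_(i < k.+1) K * weight x i <= nu * D.
  by rewrite nuD; apply: ler_sum => i _; apply: edge_term_ge.
by rewrite -mulr_sumr sum_weight // v_rec // mulrCA -grad_max ler_pM2r.
Qed.

Lemma eigenvalue_ge (f : config L -> R) (nu : R) :
  (forall e, ssep_gen c f e = nu * f e) -> (exists eta, f eta != 0) -> 0 < nu ->
  T <= nu.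
Proof.
move=> f_eig [eta0 f_eta0] nu_gt0.
pose r (p : config L * 'I_k.+1) : R :=
  if hops p.1 p.2 then `|f (flip p.1 p.2) - f p.1| / w p.2 else 0.
have [[eta x] _ r_max] := @arg_maxP _ _ _ (eta0, ord0) predT r isT.
set K := r (eta, x) in r_max.
have f_grad et i : (i < k.+1)%N -> hops et i -> `|f (flip et i) - f et| <= K * w i.
  move=> i_lt et_hops; have := r_max (et, Ordinal i_lt) isT.
  by rewrite /r /= et_hops ler_pdivrMr // w_gt0.
have K_gt0 : 0 < K.
  rewrite lt_def; apply/andP; split; last first.
    by rewrite /K /r; case: ifP => // _; rewrite divr_ge0 // ltW // w_gt0.
  apply: contra f_eta0 => /eqP K0.
  have f_flip : forall et i, (i < k.+1)%N -> f (flip et i) = f et.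
    apply: flip_invariant_of_hops => et i i_lt et_hops; apply/eqP.
    by rewrite -subr_eq0 -normr_le0 -(mul0r (w i)) -K0 f_grad.
  have := f_eig eta0; rewrite ssep_gen_chain big1 => [|i _]; last first.
    by rewrite f_flip // subrr mulr0.
  by move/esym/eqP; rewrite mulf_eq0 gt_eqF.
have eta_hops : hops eta x.
  by apply: contraTT K_gt0 => /negbTE no_hop; rewrite /K /r /= no_hop ltxx.
have grad_max : `|f (flip eta x) - f eta| = K * w x.
  by rewrite /K /r /= eta_hops divfK // gt_eqF // w_gt0.
have [D_ge0|D_lt0] := leP 0 (f (flip eta x) - f eta).
  apply: (eigenvalue_ge_of_max_gradient f_eig K_gt0 _ (ltn_ord x) eta_hops).
    by move=> et i i_lt et_hops; apply: le_trans (ler_norm _) (f_grad _ _ i_lt et_hops).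
  by rewrite -grad_max ger0_norm.
pose g e := -1 * f e.
have g_eig e : ssep_gen c g e = nu * g e by rewrite ssep_genZ f_eig mulrCA.
apply: (eigenvalue_ge_of_max_gradient g_eig K_gt0 _ (ltn_ord x) eta_hops).
  move=> et i i_lt et_hops; rewrite /g -mulrBr mulN1r.
  by apply: le_trans (f_grad _ _ i_lt et_hops); rewrite -normrN ler_norm.
by rewrite /g -mulrBr mulN1r -grad_max ltr0_norm.
Qed.

Definition occupation (phi : nat -> R) (eta : config L) : R :=
  \sum_(z : 'I_L) (eta z)%:R * phi z.

Lemma occupation_flip phi eta i : (i < k.+1)%N ->
  occupation phi eta - occupation phi (flip eta i) =
  ((eta (site i))%:R - (eta (site i.+1))%:R) * (phi i - phi i.+1).
Proof.
move=> i_lt; rewrite /occupation.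
under [X in _ - X]eq_bigr => z _ do rewrite ffunE.
rewrite (sum_mul_tpermB (fun z => (eta z)%:R) (fun z : 'I_L => phi z)); last first.
  by rewrite site_eq //; lia.
by rewrite /= !inordK //; lia.
Qed.

Lemma ssep_gen_occupation phi :
  (forall i, (i < k.+1)%N -> c i * (phi i - phi i.+1) = - v i.+1) ->
  (forall z, T * phi z = v z - v z.+1) ->
  forall eta, ssep_gen c (occupation phi) eta = T * occupation phi eta.
Proof.
move=> phi_c phi_T eta; rewrite ssep_gen_chain.
under eq_bigr => i _ do rewrite occupation_flip // mulrCA phi_c //.
pose e j : R := (eta (site j))%:R.
rewrite /occupation mulr_sumr.
under [RHS]eq_bigr => z _ do rewrite mulrCA phi_T -{1}(inord_val z) -/(site z) -/(e z) mulrBr.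
rewrite sumrB [X in _ = X - _]big_ord_recl [X in _ = _ - X]big_ord_recr /= v0 vL !mulr0 add0r addr0 -sumrB.
by apply: eq_bigr => i _; rewrite /e /bump /= add1n; ring.
Qed.

Lemma occupation_layer_neq0 phi n : (0 < n < L)%N -> phi n.-1 != phi n ->
  exists2 eta, nparticles eta = n & occupation phi eta != 0.
Proof.
move=> n_bounds phi_n; have [n_gt0 n_lt] := andP n_bounds.
pose eta1 : config L := [ffun z : 'I_L => (z < n)%N].
have eta1_n : nparticles eta1 = n by apply: nparticles_prefix; lia.
have eta1E z : eta1 z = (z < n)%N by rewrite ffunE.
have := @occupation_flip phi eta1 n.-1 ltac:(lia).
rewrite prednK // !eta1E !inordK ?prednK // ?leqnn ?ltnn; last lia.
have [occ0|] := eqVneq (occupation phi eta1) 0; last by exists eta1.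
rewrite occ0 sub0r subr0 mul1r => occ_flip.
exists (flip eta1 n.-1); first by rewrite nparticles_flip.
by rewrite -oppr_eq0 occ_flip subr_eq0.
Qed.

Lemma is_eigenvalue_n_chain n : (0 < n < L)%N -> is_eigenvalue_n L c n T.
Proof.
move=> n_bounds; pose phi z := (v z - v z.+1) / T.
have phi_T z : T * phi z = v z - v z.+1 by rewrite mulrC divfK ?gt_eqF.
have phi_c i : (i < k.+1)%N -> c i * (phi i - phi i.+1) = - v i.+1.
  move=> i_lt; have -> : phi i - phi i.+1 = - (2 * v i.+1 - v i - v i.+2) / T.
    by rewrite /phi -mulrBl; congr (_ / _); ring.
  by rewrite v_rec // mulNr mulrAC divff ?gt_eqF // mul1r mulrN c_mul_w.
have [eta eta_n occ_eta] : exists2 eta, nparticles eta = n & occupation phi eta != 0.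
  apply: occupation_layer_neq0 => //; rewrite -subr_eq0.
  apply: contraTneq (v_gt0 n_bounds) => phi0.
  have [n_gt0 n_lt] := andP n_bounds.
  have := phi_c n.-1 ltac:(lia); rewrite prednK // phi0 mulr0.
  by move/esym/eqP; rewrite oppr_eq0 => /eqP ->; rewrite ltxx.
exists (restrict_layer n (occupation phi)); split; [|split].
- by move=> e /negbTE e_n; rewrite /restrict_layer e_n.
- by exists eta; rewrite /restrict_layer eta_n eqxx.
- move=> e; rewrite ssep_gen_restrict_layer /restrict_layer.
  by case: eqP; rewrite ?(ssep_gen_occupation phi_c phi_T) ?mulr0.
Qed.

Lemma is_lambda_chain n : (0 < n < L)%N -> is_lambda L c n T.
Proof.
move=> n_bounds; split => //; first exact: is_eigenvalue_n_chain.
by move=> nu [f [_ [f_nz f_eig]]]; apply: eigenvalue_ge f_eig f_nz.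
Qed.

End Spectral.
End Chain.

Lemma poly_ge0_before_root (R : rcfType) (p : {poly R}) (a b : R) :
  a <= b -> 0 < p.[a] -> {in `]a, b[, forall z, ~~ root p z} -> 0 <= p.[b].
Proof.
move=> ab pa_gt0 no_root; rewrite leNgt; apply/negP => pb_lt0.
have [z z_in] : exists2 z, z \in `[a, b] & root (- p) z.
  by apply: poly_ivt; rewrite // !hornerN oppr_le0 oppr_ge0 !ltW.
rewrite rootN => pz0.
move: z_in; rewrite in_itv /= => /andP[az zb].
have : z \in `]a, b[.
  rewrite in_itv /= !lt_neqAle az zb !andbT.
  apply/andP; split; apply/eqP => z_eq; move: pz0; rewrite /root.
    by rewrite -z_eq gt_eqF.
  by rewrite z_eq lt_eqF.
by move/no_root; rewrite pz0.
Qed.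

Lemma three_term_neq0 (R : numDomainType) (u a : nat -> R) (N : nat) :
  u 1%N != 0 -> (forall j, u j.+2 = a j * u j.+1 - u j) ->
  (forall j, (0 < j <= N)%N -> 0 <= u j) ->
  forall j, (0 < j < N)%N -> u j != 0.
Proof.
move=> u1 u_rec u_ge0; elim=> [//|[//|j] IHj] /andP[_ j_lt].
apply: contraNneq (IHj ltac:(lia)) => u_j0.
have := u_ge0 j.+3 ltac:(lia); rewrite u_rec u_j0 mulr0 sub0r oppr_ge0 => u_le0.
by rewrite eq_le u_le0 u_ge0 //; lia.
Qed.

Section Shooting.
Variables (R : realType) (k : nat) (c : nat -> R).
Hypothesis c_gt0 : forall i, (i < k.+1)%N -> 0 < c i.
Local Notation L := k.+2.

Fixpoint chain_poly (j : nat) : {poly R} :=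
  match j with
  | 0 => 0
  | j1.+1 => match j1 with
             | 0 => 1
             | j2.+1 => (2%:P - (c j2)^-1 *: 'X) * chain_poly j1 - chain_poly j2
             end
  end.

Lemma chain_polySS_horner j t :
  (chain_poly j.+2).[t] = (2 - t / c j) * (chain_poly j.+1).[t] - (chain_poly j).[t].
Proof. by rewrite /= !hornerE (mulrC t). Qed.

Lemma chain_poly_horner0 j : (chain_poly j).[0] = j%:R.
Proof.
suff : (chain_poly j).[0] = j%:R /\ (chain_poly j.+1).[0] = j.+1%:R by case.
elim: j => [|j [IH1 IH2]]; first by rewrite /= hornerC hornerE.
by split => //; rewrite chain_polySS_horner IH1 IH2 mul0r subr0 -!natr1; ring.
Qed.

Lemma chain_poly_first_root :
  exists T : R, [/\ 0 < T, (chain_poly L).[T] = 0 &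
    forall j, (0 < j < L)%N -> 0 < (chain_poly j).[T]].
Proof.
pose Q := \prod_(j < L) chain_poly j.+1.
have QE t : Q.[t] = \prod_(j < L) (chain_poly j.+1).[t] by rewrite horner_prod.
have Q_root t j : (0 < j <= L)%N -> root (chain_poly j) t -> root Q t.
  move=> j_bounds /eqP pj_t; rewrite /root QE; apply/prodf_eq0.
  by exists (inord j.-1) => //; rewrite inordK ?prednK ?pj_t //; lia.
have Q0_neq0 : Q.[0] != 0.
  by rewrite QE; apply/prodf_neq0 => j _; rewrite chain_poly_horner0 pnatr_eq0.
have c0_gt0 := c_gt0 (ltn0Sn k).
have Q_root2 : root Q (2 * c 0%N).
  apply: (Q_root _ 2%N) => //; apply/eqP.
  by rewrite chain_polySS_horner /= hornerC horner0 mulfK ?gt_eqF // subrr mul0r subr0.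
case: (next_rootP Q 0 (2 * c 0%N + 1)) => [Q0|T _ QT T_in T_first|b _ _ no_root].
- by rewrite Q0 horner0 eqxx in Q0_neq0.
- move: T_in; rewrite in_itv /= => /andP[T_gt0 _].
  have p_ge0 j : (0 < j <= L)%N -> 0 <= (chain_poly j).[T].
    move=> j_bounds; apply: poly_ge0_before_root (ltW T_gt0) _ _.
      by rewrite chain_poly_horner0 ltr0n; lia.
    by move=> z /T_first; apply: contra; apply: Q_root.
  have p_neq0 := @three_term_neq0 _ (fun j => (chain_poly j).[T]) (fun j => 2 - T / c j) L.
  have {p_neq0} p_neq0 j : (0 < j < L)%N -> (chain_poly j).[T] != 0.
    by apply: p_neq0 => // [|i]; rewrite ?chain_polySS_horner //= hornerC oner_eq0.
  exists T; split => // [|i i_bounds]; last by rewrite lt_def p_neq0 // p_ge0 //; lia.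
  have [j _ pj_T] : exists2 j : 'I_L, true & (chain_poly j.+1).[T] == 0.
    by apply/prodf_eq0; rewrite -QE QT.
  suff j_max : j.+1 = L by move: pj_T; rewrite j_max => /eqP.
  have j_lt := ltn_ord j; apply/eqP; apply: contraLR pj_T => j_ne; apply: p_neq0; lia.
- have : 2 * c 0%N \in `]0, 2 * c 0%N + 1[ by rewrite in_itv /=; lra.
  by move/no_root; rewrite Q_root2.
Qed.

End Shooting.

Theorem corollary1 (R : realType) (L : nat) (c : nat -> R)
  (hL : (2 <= L)%N)
  (hc : forall x : nat, (x.+1 < L)%N -> 0 < c x)
  (n : nat) (hn1 : (1 <= n)%N) (hn2 : (n <= L - 1)%N) :
  exists mu : R, is_lambda L c n mu /\ is_lambda L c 1 mu.
Proof.
case: L hL hc hn2 => [|[|k]] // _ c_gt0 n_le.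
have [T [T_gt0 pL_T p_gt0]] := chain_poly_first_root c_gt0.
pose v j := (chain_poly c j).[T].
have v0 : v 0%N = 0 by rewrite /v horner0.
have v_rec i : (i < k.+1)%N -> 2 * v i.+1 - v i - v i.+2 = T * (v i.+1 / c i).
  by move=> _; rewrite /v chain_polySS_horner; ring.
have lambda_T m : (0 < m < k.+2)%N -> is_lambda k.+2 c m T.
  exact: is_lambda_chain c_gt0 T_gt0 v0 pL_T p_gt0 v_rec m.
by exists T; split; apply: lambda_T; lia.
Qed.
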